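(* There exists a unitary on $\mathbb{C}^2\otimes\mathbb{C}^2\otimes\mathbb{C}^2$ of the form $L_1\,C_1\,L_2\,C_2\,L_3\,C_3\,L_4$, where $L_1,\dots,L_4$ are local unitaries (each of the form $V\otimes W\otimes X$ with $V,W,X$ $2\times2$ unitaries) and $C_1,C_2,C_3$ are CNOT gates acting respectively on the qubit pairs $\{A,B\}$, $\{B,C\}$, $\{C,A\}$ (identity on the remaining qubit), whose Schmidt rank equals $7$.
   Context: $T=|0\rangle\langle0|\otimes I_2+|1\rangle\langle1|\otimes\sigma_1$ is the CNOT gate on two qubits (first control, second target), where $\sigma_1=\begin{bmatrix}0&1\\1&0\end{bmatrix}$. For a matrix $U$ on $\mathbb{C}^2\otimes\mathbb{C}^2\otimes\mathbb{C}^2$ (systems $A,B,C$), its Schmidt rank $\mathrm{sr}(U)$ is the least integer $r$ such that $U=\sum_{j=1}^r A_j\otimes B_j\otimes C_j$ with $A_j,B_j,C_j$ complex $2\times 2$ matrices (i.e. the tensor rank of $U$). *)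

From HB Require Import structures.
From mathcomp Require Import all_boot all_order all_algebra.
From mathcomp Require Import complex mxtens.
From mathcomp Require Import reals.
Set Implicit Arguments. Unset Strict Implicit. Unset Printing Implicit Defensive.
Import Order.TTheory GRing.Theory Num.Theory.
Local Open Scope ring_scope.

Section Qubits.
Variable R : realType.
Local Notation C := (R[i]).

Definition adj {m n} (A : 'M[C]_(m, n)) : 'M[C]_(n, m) := (map_mx (@Num.conj C) A)^T.

Definition unitary {n} (U : 'M[C]_n) : Prop := U *m adj U = 1%:M.

Definition P0 : 'M[C]_2 := \matrix_(i, j) (((i == 0 :> nat) && (j == 0 :> nat))%:R).
Definition P1 : 'M[C]_2 := \matrix_(i, j) (((i == 1 :> nat) && (j == 1 :> nat))%:R).
Definition I2 : 'M[C]_2 := 1%:M.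
Definition sigma1 : 'M[C]_2 := \matrix_(i, j) ((i != j)%:R).

Definition CNOT : 'M[C]_(2 * 2) := P0 *t I2 + P1 *t sigma1.

(* three-qubit system A (x) B (x) C, as 'M_(2*2*2) = ('M_2 *t 'M_2) *t 'M_2 *)
Definition tens3 (X Y Z : 'M[C]_2) : 'M[C]_(2 * 2 * 2) := (X *t Y) *t Z.

Definition CNOT_AB : 'M[C]_(2 * 2 * 2) := CNOT *t I2.
Definition CNOT_BC : 'M[C]_(2 * 2 * 2) := tens3 I2 P0 I2 + tens3 I2 P1 sigma1.
Definition CNOT_CA : 'M[C]_(2 * 2 * 2) := tens3 I2 I2 P0 + tens3 sigma1 I2 P1.

Definition local_unitary (L : 'M[C]_(2 * 2 * 2)) : Prop :=
  exists V W X : 'M[C]_2, [/\ unitary V, unitary W, unitary X & L = tens3 V W X].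

Definition has_tensor_decomp (U : 'M[C]_(2 * 2 * 2)) (r : nat) : Prop :=
  exists (A B D : 'I_r -> 'M[C]_2), U = \sum_(j < r) tens3 (A j) (B j) (D j).

Definition schmidt_rank_eq (U : 'M[C]_(2 * 2 * 2)) (r : nat) : Prop :=
  has_tensor_decomp U r /\ (forall s, (s < r)%N -> ~ has_tensor_decomp U s).

End Qubits.

From HB Require Import structures.
From mathcomp Require Import all_boot all_order all_algebra.
From mathcomp Require Import complex mxtens.
From mathcomp Require Import reals.
From mathcomp Require Import ring.
Set Implicit Arguments. Unset Strict Implicit. Unset Printing Implicit Defensive.
Import Order.TTheory GRing.Theory Num.Theory.
Local Open Scope ring_scope.

(* We take all four local unitaries equal to the identity.  Writing each CNOT as
   sum_a |a><a| (x) sigma1^a, the product U = CNOT_AB CNOT_BC CNOT_CA is a sum of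
   eight product operators indexed by (a, b, c), and contracting U against suitable
   test matrices yields the trilinear form tr (X Y Z) of 2 x 2 matrix multiplication.
   Hence sr(U) is the tensor rank of 2 x 2 matrix multiplication, which is 7.

   Decompositions are
     transported along (X, Y, Z) |-> (P X Q, Q^-1 Y, Z P^-1), which normalises one
     form; a substitution argument then shows n >= 7 (Winograd, Hopcroft-Kerr).
   - Strassen's identity gives the matching decomposition with 7 terms.
   - For the CNOT cycle, every tensor decomposition yields a matmul decomposition of
     the same length (lower bound), and Strassen's terms give 7 product operators
     (upper bound); the identity is a local unitary, which proves the theorem. *)

Lemma sum_ord2 (V : nmodType) (f : 'I_2 -> V) : \sum_(i < 2) f i = f 0 + f 1.
Proof. by rewrite !big_ord_recr big_ord0 /= add0r; congr (f _ + f _); apply: val_inj. Qed.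

Lemma ord2 (i : 'I_2) : i = 0 \/ i = 1.
Proof. by case: i => [[|[|//]]] Hi; [left|right]; apply: val_inj. Qed.

Section TwoByTwo.
Variable K : comNzRingType.
Local Notation E i j := (delta_mx i j : 'M[K]_2).

Lemma mulmx2E (A B : 'M[K]_2) i j : (A *m B) i j = A i 0 * B 0 j + A i 1 * B 1 j.
Proof. by rewrite mxE sum_ord2. Qed.

Lemma mxtrace2E (A : 'M[K]_2) : \tr A = A 0 0 + A 1 1.
Proof. by rewrite /mxtrace sum_ord2. Qed.

(* The nondegenerate pairing <F, X> = tr (F^T X) = sum_ij F_ij X_ij, through which
   linear forms on 2 x 2 matrices are represented by matrices. *)
Definition pairing (F X : 'M[K]_2) : K := \tr (F^T *m X).

Lemma pairingE F X :
  pairing F X = F 0 0 * X 0 0 + F 1 0 * X 1 0 + F 0 1 * X 0 1 + F 1 1 * X 1 1.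
Proof. by rewrite /pairing mxtrace2E !mulmx2E !mxE; ring. Qed.

Lemma pairing_delta F i j : pairing F (E i j) = F i j.
Proof. by case: (ord2 i) => ->; case: (ord2 j) => ->; rewrite pairingE !mxE /=; ring. Qed.

Lemma pairingD F X Y : pairing F (X + Y) = pairing F X + pairing F Y.
Proof. by rewrite /pairing mulmxDr mxtraceD. Qed.

Lemma pairingZ F X a : pairing F (a *: X) = a * pairing F X.
Proof. by rewrite /pairing -scalemxAr mxtraceZ. Qed.

Lemma pairing_sandwich F P Q X : pairing F (P *m X *m Q) = pairing (P^T *m F *m Q^T) X.
Proof. by rewrite /pairing !trmx_mul !trmxK !mulmxA mxtrace_mulC !mulmxA. Qed.

Definition matmul_form (X Y Z : 'M[K]_2) : K := \tr (X *m Y *m Z).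

Lemma matmul_formE X Y Z : matmul_form X Y Z =
    X 0 0 * Y 0 0 * Z 0 0 + X 0 0 * Y 0 1 * Z 1 0 + X 0 1 * Y 1 0 * Z 0 0
  + X 0 1 * Y 1 1 * Z 1 0 + X 1 0 * Y 0 0 * Z 0 1 + X 1 0 * Y 0 1 * Z 1 1
  + X 1 1 * Y 1 0 * Z 0 1 + X 1 1 * Y 1 1 * Z 1 1.
Proof. by rewrite /matmul_form mxtrace2E !mulmx2E; ring. Qed.

Definition matmul_decomp n (F G H : 'I_n -> 'M[K]_2) : Prop :=
  forall X Y Z, matmul_form X Y Z =
    \sum_(j < n) pairing (F j) X * pairing (G j) Y * pairing (H j) Z.

End TwoByTwo.

Section Decompositions.
Variable K : fieldType.

Lemma matmul_form_sandwich (P Q X Y Z : 'M[K]_2) : P \in unitmx -> Q \in unitmx ->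
  matmul_form (P *m X *m Q) (invmx Q *m Y) (Z *m invmx P) = matmul_form X Y Z.
Proof.
move=> uP uQ; rewrite /matmul_form.
have -> : P *m X *m Q *m (invmx Q *m Y) *m (Z *m invmx P) = P *m (X *m Y *m Z) *m invmx P.
  by rewrite !mulmxA -[P *m X *m Q *m invmx Q]mulmxA mulmxV // mulmx1.
by rewrite mxtrace_mulC [invmx P *m _]mulmxA mulVmx // mul1mx.
Qed.

(* Hence decompositions can be transported along this symmetry, which is used to
   bring one of the forms F_j into normal form. *)
Lemma matmul_decomp_sandwich n (F G H : 'I_n -> 'M[K]_2) P Q :
  matmul_decomp F G H -> P \in unitmx -> Q \in unitmx ->
  matmul_decomp (fun j => P^T *m F j *m Q^T) (fun j => (invmx Q)^T *m G j)
                (fun j => H j *m (invmx P)^T).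
Proof.
move=> D uP uQ X Y Z; rewrite -(matmul_form_sandwich X Y Z uP uQ) D.
apply: eq_bigr => j _; rewrite pairing_sandwich.
rewrite -[invmx Q *m Y]mulmx1 (pairing_sandwich (G j)) trmx1 mulmx1.
by rewrite -[Z *m invmx P]mul1mx mulmxA (pairing_sandwich (H j)) trmx1 mul1mx.
Qed.

Lemma pairing_vec_mx (F : 'M[K]_2) (u : 'rV_(2 * 2)) :
  pairing F (vec_mx u) = \sum_k mxvec F 0 k * u 0 k.
Proof.
have -> : pairing F (vec_mx u) = \sum_i \sum_j F i j * vec_mx u i j.
  by rewrite pairingE !sum_ord2; ring.
rewrite (reindex _ (curry_mxvec_bij _ _)) /= pair_bigA /=.
by apply: eq_bigr => [[i j]] _ /=; rewrite mxvecE mxE.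
Qed.

Lemma common_zero_mx2 (I : finType) (h : I -> 'M[K]_2) (S : {set I}) : (#|S| <= 3)%N ->
  exists2 Om : 'M[K]_2, Om != 0 & forall i, i \in S -> pairing (h i) Om = 0.
Proof.
move=> cardS.
pose A : 'M[K]_(2 * 2, #|S|) := \matrix_(k, i) mxvec (h (enum_val i)) 0 k.
have /rowV0Pn[v /sub_kermxP vA v_nz] : kermx A != 0.
  rewrite -mxrank_eq0 -lt0n mxrank_ker subn_gt0.
  by apply: leq_ltn_trans (rank_leq_col A) _; apply: leq_ltn_trans cardS _.
exists (vec_mx v); first by rewrite vec_mx_eq0.
move=> i iS; rewrite pairing_vec_mx.
have := congr1 (fun M : 'M_(1, #|S|) => M 0 (enum_rank_in iS i)) vA.
rewrite !mxE => vAi; rewrite -[RHS]vAi; apply: eq_bigr => k _.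
by rewrite mxE enum_rankK_in // mulrC.
Qed.

End Decompositions.

Section PlaneLinearAlgebra.
Variable K : fieldType.

Lemma cramer2 (a1 b1 a2 b2 t1 t2 : K) : a1 * b2 - b1 * a2 != 0 ->
  exists s0 s1, s0 * a1 + s1 * b1 = t1 /\ s0 * a2 + s1 * b2 = t2.
Proof.
move=> det_nz; exists ((t1 * b2 - t2 * b1) / (a1 * b2 - b1 * a2)).
by exists ((t2 * a1 - t1 * a2) / (a1 * b2 - b1 * a2)); split; field.
Qed.

Lemma independent_pair (I : finType) (P : pred I) (a b : I -> K) :
  (forall s0 s1, (forall j, P j -> s0 * a j + s1 * b j = 0) -> s0 = 0 /\ s1 = 0) ->
  exists j1 j2, [/\ P j1, P j2 & a j1 * b j2 - b j1 * a j2 != 0].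
Proof.
move=> sep.
have [j1 /andP[Pj1 nz1] | all0] := pickP [pred j | P j && ((a j != 0) || (b j != 0))];
  last first.
  have [|/eqP] := sep 1 0; last by rewrite oner_eq0.
  move=> j Pj; move: (all0 j); rewrite /= Pj => /norP[/negPn/eqP-> /negPn/eqP->].
  by rewrite !mulr0 addr0.
exists j1.
have [j2 /andP[Pj2 det_nz] | det0] :=
  pickP [pred j | P j && (a j1 * b j - b j1 * a j != 0)]; first by exists j2.
have [|/eqP] := sep (- b j1) (a j1).
  by move=> j Pj; move: (det0 j); rewrite /= Pj => /negbFE/eqP <-; ring.
by rewrite oppr_eq0 => /eqP b0 a0; move: nz1; rewrite a0 b0 eqxx.
Qed.

End PlaneLinearAlgebra.

Lemma card_setC3 (I : finType) (x y z : I) : x != y -> x != z -> y != z ->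
  #|~: [set x; y; z]| = (#|I| - 3)%N.
Proof.
move=> xy xz yz; have := cardsC [set x; y; z].
by rewrite -setUA cardsU1 cards2 yz !inE negb_or xy xz => <-; rewrite addKn.
Qed.

Section NormalisedDecomposition.
Variables (K : fieldType) (n : nat) (F G H : 'I_n -> 'M[K]_2) (j0 : 'I_n).
Hypothesis decomp : matmul_decomp F G H.
Hypotheses (F00 : F j0 0 0 = 1) (F01 : F j0 0 1 = 0) (F10 : F j0 1 0 = 0).
Local Notation E i j := (delta_mx i j : 'M[K]_2).

Lemma pairing_first_row (A : 'M[K]_2) s0 s1 :
  pairing A (s0 *: E 0 0 + s1 *: E 0 1) = s0 * A 0 0 + s1 * A 0 1.
Proof. by rewrite pairingD !pairingZ !pairing_delta. Qed.

(* The forms <G_j, .>, j != j0, separate the matrices supported on the first row: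
   otherwise Y |-> tr (E_10 Y Z) would vanish on such a nonzero Y for all Z. *)
Lemma first_row_separated s0 s1 :
  (forall j, j != j0 -> s0 * G j 0 0 + s1 * G j 0 1 = 0) -> s0 = 0 /\ s1 = 0.
Proof.
move=> orth; pose Y := s0 *: E 0 0 + s1 *: E 0 1.
have vanish Z : matmul_form (E 1 0) Y Z = 0.
  rewrite decomp big1 // => j _; have [->|j_j0] := eqVneq j j0.
    by rewrite pairing_delta F10 !mul0r.
  by rewrite pairing_first_row orth // mulr0 mul0r.
have <- : matmul_form (E 1 0) Y (E 0 1) = s0 by rewrite matmul_formE !mxE /=; ring.
have <- : matmul_form (E 1 0) Y (E 1 1) = s1 by rewrite matmul_formE !mxE /=; ring.
by rewrite !vanish.
Qed.

Section Witness.
Variables (j1 j2 : 'I_n) (Om : 'M[K]_2).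
Hypothesis det12 : G j1 0 0 * G j2 0 1 - G j1 0 1 * G j2 0 0 != 0.
Hypothesis Om_zero : forall j, j \notin [set j0; j1; j2] -> pairing (H j) Om = 0.

(* Only the terms j0, j1, j2 of the decomposition can contribute to tr (X Y Om). *)
Lemma witness_vanishes X Y : pairing (F j0) X = 0 ->
  pairing (G j1) Y = 0 -> pairing (G j2) Y = 0 -> matmul_form X Y Om = 0.
Proof.
move=> FX G1Y G2Y; rewrite decomp big1 // => j _.
have [-> | j_j0] := eqVneq j j0; first by rewrite FX !mul0r.
have [-> | j_j1] := eqVneq j j1; first by rewrite G1Y mulr0 mul0r.
have [-> | j_j2] := eqVneq j j2; first by rewrite G2Y mulr0 mul0r.
by rewrite Om_zero ?mulr0 // !inE (negbTE j_j0) (negbTE j_j1) (negbTE j_j2).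
Qed.

Lemma second_row_lift (k : 'I_2) : exists Y : 'M[K]_2,
  [/\ pairing (G j1) Y = 0, pairing (G j2) Y = 0 & forall l, Y 1 l = E 1 k 1 l].
Proof.
have [s0 [s1 [sol1 sol2]]] :=
  cramer2 (- pairing (G j1) (E 1 k)) (- pairing (G j2) (E 1 k)) det12.
exists (s0 *: E 0 0 + s1 *: E 0 1 + E 1 k); split.
- by rewrite pairingD pairing_first_row sol1 addNr.
- by rewrite pairingD pairing_first_row sol2 addNr.
- by move=> l; rewrite !mxE /=; ring.
Qed.

(* Testing witness_vanishes with X = E_01, then X = E_11 - f E_00 (both killed by
   <F_j0, .>), against the lifts of the two unit second rows shows that the first,
   then the second column of Om vanish. *)
Lemma witness_zero : Om = 0.
Proof.
have col0 k : Om k 0 = 0.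
  have [Y [G1Y G2Y rowY]] := second_row_lift k.
  have FX : pairing (F j0) (E 0 1) = 0 by rewrite pairing_delta.
  have := witness_vanishes FX G1Y G2Y.
  rewrite matmul_formE !mxE /= !rowY !mxE.
  by case: (ord2 k) => -> /= h; rewrite -h; ring.
have col1 k : Om k 1 = 0.
  have [Y [G1Y G2Y rowY]] := second_row_lift k.
  have FX : pairing (F j0) (E 1 1 - F j0 1 1 *: E 0 0) = 0.
    by rewrite pairingE !mxE /= F00 F01 F10; ring.
  have := witness_vanishes FX G1Y G2Y.
  rewrite matmul_formE !mxE /= !rowY !mxE !col0.
  by case: (ord2 k) => -> /= h; rewrite -h; ring.
apply/matrixP => i j; rewrite mxE.
by case: (ord2 j) => ->; [apply: col0 | apply: col1].
Qed.

End Witness.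

(* Choose j1, j2 by first_row_separated and Om killed by the at most three forms
   <H_j, .>, j outside {j0, j1, j2}; witness_zero contradicts Om != 0. *)
Lemma normalised_decomp_long : (6 < n)%N.
Proof.
rewrite ltnNge; apply/negP => short.
have [j1 [j2 [/= j1_j0 j2_j0 det12]]] := independent_pair first_row_separated.
have j1_j2 : j1 != j2 by apply: contraNneq det12 => ->; rewrite mulrC subrr.
have card_rest : (#|~: [set j0; j1; j2]| <= 3)%N.
  by rewrite card_setC3 ?(eq_sym j0) // (card_ord n) leq_subLR.
have [Om Om_nz Om_zero] := common_zero_mx2 H card_rest.
have Om0 : Om = 0.
  by apply: (witness_zero det12) => j; rewrite -in_setC; apply: Om_zero.
by rewrite Om0 eqxx in Om_nz.
Qed.

End NormalisedDecomposition.

(* Some F_j0 is nonzero (tr (E_00^3) = 1);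
   moving it to its rank normal form pid_mx r, r > 0, puts it in the normal form of
   the section above. *)
Theorem matmul_decomp_long (K : fieldType) n (F G H : 'I_n -> 'M[K]_2) :
  matmul_decomp F G H -> (6 < n)%N.
Proof.
move=> decomp.
have [j0 Fj0_nz | F0] := pickP (fun j => F j != 0); last first.
  have := decomp (delta_mx 0 0) (delta_mx 0 0) (delta_mx 0 0).
  rewrite big1 => [|j _]; last first.
    by move/negbFE/eqP: (F0 j) ->; rewrite /pairing trmx0 mul0mx mxtrace0 !mul0r.
  by rewrite matmul_formE !mxE /= => /eqP; rewrite !mulr1 !mulr0 !addr0 oner_eq0.
pose L := col_ebase (F j0); pose U := row_ebase (F j0).
have uL : (invmx L)^T \in unitmx by rewrite unitmx_tr unitmx_inv col_ebase_unit.
have uU : (invmx U)^T \in unitmx by rewrite unitmx_tr unitmx_inv row_ebase_unit.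
have normal_form : (invmx L)^T^T *m F j0 *m (invmx U)^T^T = pid_mx (\rank (F j0)).
  rewrite !trmxK -{1}(mulmx_ebase (F j0)) -/L -/U !mulmxA mulVmx ?col_ebase_unit //.
  by rewrite mul1mx -mulmxA mulmxV ?row_ebase_unit // mulmx1.
have rank_pos : (0 < \rank (F j0))%N by rewrite lt0n mxrank_eq0.
apply: (normalised_decomp_long (j0 := j0) (matmul_decomp_sandwich decomp uL uU));
  by rewrite normal_form mxE /= ?rank_pos.
Qed.

(* Strassen's seven products, for the entries x, y, z of three 2 x 2 arrays. *)
Section StrassenTerms.
Variable V : zmodType.
Implicit Types x y z : 'I_2 -> 'I_2 -> V.

Definition strassenX x (k : 'I_7) : V := nth 0 [:: x 0 0 + x 1 1; x 1 0 + x 1 1; x 0 0;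
  x 1 1; x 0 0 + x 0 1; x 1 0 - x 0 0; x 0 1 - x 1 1] k.
Definition strassenY y (k : 'I_7) : V := nth 0 [:: y 0 0 + y 1 1; y 0 0; y 0 1 - y 1 1;
  y 1 0 - y 0 0; y 1 1; y 0 0 + y 0 1; y 1 0 + y 1 1] k.
Definition strassenZ z (k : 'I_7) : V := nth 0 [:: z 0 0 + z 1 1; z 0 1 - z 1 1;
  z 1 0 + z 1 1; z 0 0 + z 0 1; z 1 0 - z 0 0; z 1 1; z 0 0] k.

End StrassenTerms.

Lemma strassen_identity (K : comPzRingType) (x y z : 'I_2 -> 'I_2 -> K) :
  \sum_(a < 2) \sum_(b < 2) \sum_(c < 2) z c a * x a b * y b c =
  \sum_(k < 7) strassenZ z k * strassenX x k * strassenY y k.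
Proof.
by rewrite !sum_ord2 !big_ord_recl big_ord0 /strassenX /strassenY /strassenZ /=; ring.
Qed.

Section StrassenEntries.
Variables (K : pzRingType) (i j : 'I_2).
Implicit Types x : 'I_2 -> 'I_2 -> 'M[K]_2.
Local Notation entry x := (fun a b => x a b i j).

Lemma strassenX_entry x k : strassenX x k i j = strassenX (entry x) k.
Proof. by case: k => [[|[|[|[|[|[|[|//]]]]]]] ?]; rewrite /= ?mxE. Qed.
Lemma strassenY_entry x k : strassenY x k i j = strassenY (entry x) k.
Proof. by case: k => [[|[|[|[|[|[|[|//]]]]]]] ?]; rewrite /= ?mxE. Qed.
Lemma strassenZ_entry x k : strassenZ x k i j = strassenZ (entry x) k.
Proof. by case: k => [[|[|[|[|[|[|[|//]]]]]]] ?]; rewrite /= ?mxE. Qed.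

End StrassenEntries.

Section Kronecker.
Variable K : comPzRingType.

Lemma tensmxDl m n p q (A A' : 'M[K]_(m, n)) (B : 'M[K]_(p, q)) :
  (A + A') *t B = A *t B + A' *t B.
Proof. by apply/matrixP => i j; rewrite !mxE mulrDl. Qed.

Lemma mxtrace_tens m n (A : 'M[K]_m) (B : 'M[K]_n) : \tr (A *t B) = \tr A * \tr B.
Proof.
rewrite /mxtrace mulr_suml.
rewrite (eq_bigr (fun i => \sum_j A i i * B j j)) => [|i _]; last by rewrite mulr_sumr.
rewrite pair_bigA /= (reindex (@mxtens_index m n)); last first.
  apply: onW_bij; exists (@mxtens_unindex m n).
  - exact: mxtens_indexK.
  - exact: mxtens_unindexK.
by apply: eq_bigr => [[i j]] _; rewrite tensmxE.
Qed.

Lemma tensmx11 m n : (1%:M : 'M[K]_m) *t (1%:M : 'M[K]_n) = 1%:M.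
Proof.
apply/matrixP => i j; case: (mxtens_indexP i) => i1 i2; case: (mxtens_indexP j) => j1 j2.
rewrite tensmxE !mxE (can_eq (@mxtens_indexK m n)) xpair_eqE.
by case: (i1 == j1); case: (i2 == j2); rewrite /= ?mulr1n ?mulr0n ?mulr1 ?mulr0.
Qed.

End Kronecker.

Section CnotCycle.
Variable R : realType.
Local Notation C := (R[i]).
Local Notation tens3 := (@tens3 R).

Lemma tens3_mul (A B D A' B' D' : 'M[C]_2) :
  tens3 A B D *m tens3 A' B' D' = tens3 (A *m A') (B *m B') (D *m D').
Proof. by rewrite /tens3 !tensmx_mul. Qed.

Lemma tens3E (A B D : 'M[C]_2) i1 i2 i3 k1 k2 k3 :
  tens3 A B D (mxtens_index (mxtens_index (i1, i2), i3))
              (mxtens_index (mxtens_index (k1, k2), k3)) = A i1 k1 * B i2 k2 * D i3 k3.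
Proof. by rewrite /tens3 !tensmxE. Qed.

Definition contract (M : 'M[C]_(2 * 2 * 2)) (P1 P2 P3 : 'M[C]_2) : C :=
  \tr (M *m tens3 P1 P2 P3).

Lemma contract_tens3 A B D P1 P2 P3 :
  contract (tens3 A B D) P1 P2 P3 = \tr (A *m P1) * \tr (B *m P2) * \tr (D *m P3).
Proof. by rewrite /contract tens3_mul /tens3 !mxtrace_tens. Qed.

Lemma contract_sum (I : Type) (r : seq I) (P : pred I) (M : I -> 'M[C]_(2 * 2 * 2))
    P1 P2 P3 :
  contract (\sum_(j <- r | P j) M j) P1 P2 P3 = \sum_(j <- r | P j) contract (M j) P1 P2 P3.
Proof. by rewrite /contract mulmx_suml raddf_sum. Qed.

Definition proj (a : 'I_2) : 'M[C]_2 := if a == 0 then P0 R else P1 R.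
Definition flip (a : 'I_2) : 'M[C]_2 := if a == 0 then I2 R else sigma1 R.

Lemma CNOT_AB_sum : CNOT_AB R = \sum_(a < 2) tens3 (proj a) (flip a) (I2 R).
Proof. by rewrite sum_ord2 /CNOT_AB /CNOT tensmxDl. Qed.
Lemma CNOT_BC_sum : CNOT_BC R = \sum_(b < 2) tens3 (I2 R) (proj b) (flip b).
Proof. by rewrite sum_ord2. Qed.
Lemma CNOT_CA_sum : CNOT_CA R = \sum_(c < 2) tens3 (flip c) (I2 R) (proj c).
Proof. by rewrite sum_ord2. Qed.

Definition cnot_cycle : 'M[C]_(2 * 2 * 2) := CNOT_AB R *m CNOT_BC R *m CNOT_CA R.

Lemma cnot_cycle_sum : cnot_cycle = \sum_(a < 2) \sum_(b < 2) \sum_(c < 2)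
   tens3 (proj a *m flip c) (flip a *m proj b) (flip b *m proj c).
Proof.
rewrite /cnot_cycle CNOT_AB_sum CNOT_BC_sum CNOT_CA_sum 2!mulmx_suml.
apply: eq_bigr => a _; rewrite [tens3 _ _ _ *m _]mulmx_sumr mulmx_suml.
apply: eq_bigr => b _.
rewrite mulmx_sumr; apply: eq_bigr => c _.
by rewrite !tens3_mul /I2 !mulmx1 !mul1mx.
Qed.

Definition dualA (Z : 'M[C]_2) : 'M[C]_2 :=
  \matrix_(p, q) (if p == q then Z 0 q else Z 1 q).
Definition dualB (X : 'M[C]_2) : 'M[C]_2 :=
  \matrix_(p, q) (if p == q then X 0 p else X 1 p).

Lemma trace_dualA (a c : 'I_2) Z : \tr (proj a *m flip c *m dualA Z) = Z c a.
Proof.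
by case: (ord2 a) => ->; case: (ord2 c) => ->;
  rewrite /proj /flip /= mxtrace2E !mulmx2E !mxE /=; ring.
Qed.

Lemma trace_dualB (a b : 'I_2) X : \tr (flip a *m proj b *m dualB X) = X a b.
Proof.
by case: (ord2 a) => ->; case: (ord2 b) => ->;
  rewrite /proj /flip /= mxtrace2E !mulmx2E !mxE /=; ring.
Qed.

Lemma contract_cnot_cycle X Y Z :
  contract cnot_cycle (dualA Z) (dualB X) (dualB Y) = matmul_form X Y Z.
Proof.
rewrite cnot_cycle_sum contract_sum.
rewrite (eq_bigr (fun a => \sum_(b < 2) \sum_(c < 2) Z c a * X a b * Y b c)); last first.
  move=> a _; rewrite contract_sum; apply: eq_bigr => b _.
  rewrite contract_sum; apply: eq_bigr => c _.
  by rewrite contract_tens3 trace_dualA !trace_dualB.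
by rewrite matmul_formE !sum_ord2; ring.
Qed.

Definition dualA_form (B : 'M[C]_2) := \matrix_(p, q) \tr (B *m dualA (delta_mx p q)).
Definition dualB_form (B : 'M[C]_2) := \matrix_(p, q) \tr (B *m dualB (delta_mx p q)).

Lemma pairing_dualA_form B Z : pairing (dualA_form B) Z = \tr (B *m dualA Z).
Proof. by rewrite pairingE !mxE !mxtrace2E !mulmx2E !mxE /=; ring. Qed.
Lemma pairing_dualB_form B X : pairing (dualB_form B) X = \tr (B *m dualB X).
Proof. by rewrite pairingE !mxE !mxtrace2E !mulmx2E !mxE /=; ring. Qed.

(* A tensor decomposition of the cnot cycle is a matmul decomposition. *)
Lemma cnot_cycle_decomp_long s : has_tensor_decomp cnot_cycle s -> (6 < s)%N.
Proof.
move=> [A [B [D decomp]]].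
apply: (@matmul_decomp_long _ s (dualB_form \o B) (dualB_form \o D) (dualA_form \o A)).
move=> X Y Z; rewrite -contract_cnot_cycle decomp contract_sum; apply: eq_bigr => j _.
by rewrite contract_tens3 /= pairing_dualA_form !pairing_dualB_form; ring.
Qed.

Lemma strassen_tens3 (x y z : 'I_2 -> 'I_2 -> 'M[C]_2) :
  \sum_(a < 2) \sum_(b < 2) \sum_(c < 2) tens3 (z c a) (x a b) (y b c)
  = \sum_(k < 7) tens3 (strassenZ z k) (strassenX x k) (strassenY y k).
Proof.
apply/matrixP => i j.
case: (mxtens_indexP i) => i12 i3; case: (mxtens_indexP i12) => i1 i2.
case: (mxtens_indexP j) => j12 j3; case: (mxtens_indexP j12) => j1 j2.
rewrite !summxE.
transitivity
  (\sum_(a < 2) \sum_(b < 2) \sum_(c < 2) z c a i1 j1 * x a b i2 j2 * y b c i3 j3).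
  apply: eq_bigr => a _; rewrite summxE; apply: eq_bigr => b _; rewrite summxE.
  by apply: eq_bigr => c _; rewrite tens3E.
rewrite (strassen_identity (fun a b => x a b i2 j2)); apply: eq_bigr => k _.
by rewrite tens3E strassenX_entry strassenY_entry strassenZ_entry.
Qed.

Lemma cnot_cycle_decomp7 : has_tensor_decomp cnot_cycle 7.
Proof.
exists (strassenZ (fun c a => proj a *m flip c)), (strassenX (fun a b => flip a *m proj b)).
exists (strassenY (fun b c => flip b *m proj c)).
by rewrite cnot_cycle_sum -strassen_tens3.
Qed.

Lemma unitary_I2 : unitary (I2 R).
Proof.
apply/matrixP => i j; rewrite /adj /I2 mul1mx !mxE eq_sym.
by case: (i == j); rewrite ?conjC1 ?conjC0.
Qed.

Lemma local_unitary_1 : local_unitary (1%:M : 'M[C]_(2 * 2 * 2)).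
Proof.
exists (I2 R), (I2 R), (I2 R); split; try exact: unitary_I2.
by rewrite /tens3 /I2 !tensmx11.
Qed.

End CnotCycle.

Theorem theorem7 (R : realType) :
  exists L1 L2 L3 L4 : 'M[R[i]]_(2 * 2 * 2),
    [/\ local_unitary L1, local_unitary L2, local_unitary L3, local_unitary L4 &
      schmidt_rank_eq
        (L1 *m CNOT_AB R *m L2 *m CNOT_BC R *m L3 *m CNOT_CA R *m L4) 7].
Proof.
exists 1%:M, 1%:M, 1%:M, 1%:M; split; try exact: local_unitary_1.
rewrite !mulmx1 !mul1mx -/(cnot_cycle R); split; first exact: cnot_cycle_decomp7.
by move=> s s_lt7 /cnot_cycle_decomp_long; rewrite ltnNge -ltnS s_lt7.
Qed.
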